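(* Let $k\geq 2$ be an integer, $n=rk$ with $r>2$ an integer, and $e=\lceil r/2\rceil-1$. Let $\mathcal{C}_i=\{\alpha U_i\mid \alpha\in\mathbb{F}_{q^n}^*\}$. Then the subspace code $\mathcal{C}=\bigcup_{i=1}^{e(q-1)(q^k-1)}\mathcal{C}_i$ is a cyclic constant dimension subspace code with cardinality $e(q^k-1)(q^n-1)$ and minimum distance $2k-2$.
   Context: $q$ is a prime power, $\mathbb{F}_{q^n}$ is the extension of degree $n$ of $\mathbb{F}_q$, viewed as an $n$-dimensional $\mathbb{F}_q$-vector space. The subspace distance is $d(U,V)=\dim U+\dim V-2\dim(U\cap V)$; a constant dimension subspace code is a set of $k$-dimensional $\mathbb{F}_q$-subspaces of $\mathbb{F}_{q^n}$, and it is cyclic if it is a union of orbits $\{\alpha U\mid \alpha\in\mathbb{F}_{q^n}^*\}$. Let $\xi$ be a primitive element of $\mathbb{F}_{q^k}$ and $G=\mathbb{F}_{q^k}^*/\langle\xi^{q-1}\rangle$, a cyclic group of order $q-1$ (elements of $G$ are used via fixed coset representatives in $\mathbb{F}_{q^k}^*$). Let $\gamma$ be a root of an irreducible polynomial of degree $r$ over $\mathbb{F}_{q^k}$ (so $1,\gamma,\dots,\gamma^{r-1}$ are linearly independent over $\mathbb{F}_{q^k}$ and $\mathbb{F}_{q^k}(\gamma)=\mathbb{F}_{q^n}$). The $e(q-1)(q^k-1)$ subspaces $U_i=\{u+(\tau_i u^q+u)\delta_i\gamma^{l_i}\mid u\in\mathbb{F}_{q^k}\}$, $1\le i\le e(q-1)(q^k-1)$,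 are indexed by all triples $(\tau_i,\delta_i,l_i)$ with $\tau_i\in G$, $\delta_i\in\mathbb{F}_{q^k}^*$, $1\leq l_i\leq e$. *)

From HB Require Import structures.
From mathcomp Require Import all_boot all_order all_algebra all_field.
Set Implicit Arguments. Unset Strict Implicit. Unset Printing Implicit Defensive.
Import GRing.Theory.
Local Open Scope ring_scope.

Definition subspace_dist (F : fieldType) (vT : vectType F) (U V : {vspace vT}) : nat :=
  (\dim U + \dim V - 2 * \dim (U :&: V))%N.

Definition is_scaled_U (F : fieldType) (L : fieldExtType F) (q : nat)
    (K : {subfield L}) (alpha tau delta gamma : L) (l : nat) (V : {vspace L}) : Prop :=
  forall x : L, x \in V <->
    exists2 u, u \in K & x = alpha * (u + (tau * u ^+ q + u) * delta * gamma ^+ l).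

(* Membership in the code C = union over (tau_i, delta, l) of the orbits
   C_i = { alpha U_i | alpha in F_{q^n}^* }. *)
Definition in_code (F : fieldType) (L : fieldExtType F) (q e : nat)
    (K : {subfield L}) (T : nat -> L) (gamma : L) (V : {vspace L}) : Prop :=
  exists alpha : L, alpha != 0 /\
  exists i : nat, (i < q - 1)%N /\
  exists delta : L, [/\ delta \in K, delta != 0 &
  exists l : nat, [/\ (1 <= l)%N, (l <= e)%N &
     is_scaled_U q K alpha (T i) delta gamma l V]].

From HB Require Import structures.
From mathcomp Require Import all_boot all_order all_algebra all_field.
From mathcomp Require Import zify ring.
Import GRing.Theory.
Local Open Scope ring_scope.
Set Implicit Arguments. Unset Strict Implicit. Unset Printing Implicit Defensive.

(* Every member of the code is alpha U, where U is the image of K = F_{q^k} under the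
   F-linear map u |-> u + (tau u^q + u) delta gamma^l; it has dimension k because 1 and
   gamma^l are K-independent (2l < r).  The heart of the proof: if alpha U_{tau,delta,l} and
   beta U_{tau',delta',l'} share two F-independent vectors, cross-multiplying the two
   relations and reading off the K-coefficients of 1, gamma^l, gamma^l', gamma^(l+l')
   (distinct powers below r, the degree of gamma over K) gives u = lam v and
   tau lam^q = lam tau'.  Hence tau = tau' (they represent distinct cosets of the
   (q-1)-th powers in K^* ), lam lies in F, and then delta = delta', l = l', beta in F^* alpha.
   So distinct members meet in dimension at most one (distance >= 2k - 2, attained by two
   members sharing one vector), and each member comes from exactly q - 1 parameter tuples
   (c alpha, tau, delta, l) with c in F^*, which gives the cardinality. *)

Lemma exists_notin_vspace (F : fieldType) (vT : vectType F) (U W : {vspace vT}) :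
  (\dim W < \dim U)%N -> exists2 w, w \in U & w \notin W.
Proof. by move=> ltWU; apply/subvPn; apply: contraTN ltWU => /dimvS; rewrite -leqNgt. Qed.

Lemma dimv_gt1_free_pair (F : fieldType) (vT : vectType F) (U : {vspace vT}) :
  (1 < \dim U)%N ->
  exists w1 w2, [/\ w1 \in U, w2 \in U, w1 != 0 & w2 \notin <[w1]>%VS].
Proof.
move=> U_gt1; have w1_neq0 : vpick U != 0.
  by rewrite vpick0; apply: contraTneq U_gt1 => ->; rewrite dimv0.
have [w2 w2U w2_notin] : exists2 w2, w2 \in U & w2 \notin <[vpick U]>%VS.
  by apply: exists_notin_vspace; rewrite dim_vline w1_neq0.
by exists (vpick U), w2; rewrite memv_pick.
Qed.

Lemma subspace_dist_cap_le1 (F : fieldType) (vT : vectType F) (U V : {vspace vT}) k :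
  \dim U = k -> \dim V = k -> (\dim (U :&: V) <= 1)%N -> (2 * k - 2 <= subspace_dist U V)%N.
Proof. by rewrite /subspace_dist => -> ->; lia. Qed.

Lemma subspace_dist_cap1 (F : fieldType) (vT : vectType F) (U V : {vspace vT}) k :
  \dim U = k -> \dim V = k -> \dim (U :&: V) = 1%N -> subspace_dist U V = (2 * k - 2)%N.
Proof. by rewrite /subspace_dist => -> -> ->; lia. Qed.

Lemma size_uniform_fibers (T1 T2 : eqType) (g : T1 -> T2) (s : seq T1) m :
  {in s, forall x, count (fun y => g y == g x) s = m} ->
  size s = (size (undup (map g s)) * m)%N.
Proof.
move=> fiber_m; rewrite -(size_map g) -(perm_size (perm_count_undup _)).
rewrite size_flatten /shape -map_comp sumnE big_map big_seq.
rewrite (eq_bigr (fun=> m)) => [|v]; last first.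
  by rewrite mem_undup => /mapP[x xs ->] /=; rewrite size_nseq count_map fiber_m.
by rewrite -big_seq big_const_seq count_predT iter_addn_0 mulnC.
Qed.

Section Frobenius.
Variables (F : finFieldType) (L : fieldExtType F).
Local Notation q := #|F|.

Lemma pchar_nat_card : [pchar L].-nat q.
Proof.
have [p p_pr pF] := finPcharP F.
rewrite (eq_pnat _ (pchar_lalg L)) (eq_pnat _ (pcharf_eq pF)) (card_pprimeChar pF).
by rewrite pnatX pnat_id.
Qed.

Lemma exprD_card (x y : L) : (x + y) ^+ q = x ^+ q + y ^+ q.
Proof. exact: exprDn_pchar pchar_nat_card. Qed.

Lemma exprZ_card (c : F) (x : L) : (c *: x) ^+ q = c *: x ^+ q.
Proof.
rewrite -(mulr_algl c x) -(mulr_algl c (x ^+ q)) exprMn.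
by rewrite -in_algE -(rmorphXn (in_alg L)) expf_card.
Qed.

Lemma mem1v_card (x : L) : (x \in 1%VS) = (x ^+ q == x).
Proof. by rewrite (Fermat's_little_theorem 1%AS) /= dimv1 expn1. Qed.

Lemma frob_cross_neq0 (v1 v2 : L) :
  v1 != 0 -> v2 \notin <[v1]>%VS -> v1 ^+ q * v2 != v1 * v2 ^+ q.
Proof.
move=> v1_neq0; apply: contraNneq => cross; apply/vlineP.
have /vlineP[c cE] : v2 / v1 \in 1%VS.
  by rewrite mem1v_card exprMn exprVn eqr_div ?expf_neq0 // mulrC -cross mulrC.
by exists c; rewrite -[v2](divfK v1_neq0) cE -scalerAl mul1r.
Qed.

End Frobenius.

Section PowerIndependence.
Variables (F : fieldType) (L : fieldExtType F) (K : {subfield L}) (gamma : L) (r : nat).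
Hypothesis minPoly_size : size (minPoly K gamma) = r.+1.

Lemma polyOver_root_eq0 (p : {poly L}) :
  p \is a polyOver K -> (size p <= r)%N -> root p gamma -> p = 0.
Proof.
move=> pK p_small p_root; apply: contraTeq p_small => p_neq0.
by rewrite -ltnNge -minPoly_size dvdp_leq ?minPoly_dvdp.
Qed.

Lemma powers4_coef_eq0 (c0 c1 c2 c3 : L) (l l' : nat) :
  c0 \in K -> c1 \in K -> c2 \in K -> c3 \in K ->
  (0 < l)%N -> (0 < l')%N -> (l + l' < r)%N ->
  c0 + c1 * gamma ^+ l + c2 * gamma ^+ l' + c3 * gamma ^+ (l + l') = 0 ->
  [/\ c0 = 0, c3 = 0 & c1 + (l == l')%:R * c2 = 0].
Proof.
move=> c0K c1K c2K c3K l_gt0 l'_gt0 ll'_lt_r comb_eq0.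
pose P := c0%:P + c1%:P * 'X^l + c2%:P * 'X^l' + c3%:P * 'X^(l + l').
have coefP j : P`_j = c0 * (j == 0)%:R + c1 * (j == l)%:R + c2 * (j == l')%:R
                      + c3 * (j == l + l')%:R.
  by rewrite !coefD !coefCM !coefXn coefC; case: (j == 0)%N; rewrite ?mulr1 ?mulr0.
have P_eq0 : P = 0.
  apply: polyOver_root_eq0.
  - by rewrite !rpredD ?rpredM ?polyOverC ?polyOverXn.
  - apply/leq_sizeP => j le_r_j; rewrite coefP !gtn_eqF ?mulr0 ?addr0 //; lia.
  - by rewrite /root /P !hornerE comb_eq0.
have ll'_gt0 : (0 < l + l')%N by lia.
have l_lt : (l < l + l')%N by lia.
have l'_lt : (l' < l + l')%N by lia.
have := coefP 0; have := coefP l; have := coefP (l + l'); rewrite P_eq0 !coef0 !eqxx.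
rewrite !(ltn_eqF l_gt0, ltn_eqF l'_gt0, ltn_eqF ll'_gt0, gtn_eqF l_gt0, gtn_eqF ll'_gt0).
rewrite !(ltn_eqF l_lt, gtn_eqF l_lt, gtn_eqF l'_lt) !mulr0 !mulr1 !addr0 !add0r.
by move=> <- coef_l <-; rewrite mulrC coef_l.
Qed.

End PowerIndependence.

Section OrbitCode.
Variables (F : finFieldType) (L : fieldExtType F) (K : {subfield L}) (gamma : L).
Local Notation q := #|F|.

Definition twist (tau u : L) : L := tau * u ^+ q + u.

Definition Umap (tau delta : L) (l : nat) (u : L) : L := u + twist tau u * delta * gamma ^+ l.

Lemma Umap_is_linear tau delta l : linear (Umap tau delta l).
Proof.
move=> c u v; rewrite /Umap /twist exprD_card exprZ_card.
by rewrite -[c *: u]mulr_algl -[c *: u ^+ q]mulr_algl -[c *: (_ + _)]mulr_algl; ring.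
Qed.

HB.instance Definition _ tau delta l :=
  GRing.isLinear.Build F L L *:%R (Umap tau delta l) (Umap_is_linear tau delta l).

Definition Uspace (alpha tau delta : L) (l : nat) : {vspace L} :=
  ((amull alpha \o linfun (Umap tau delta l))%VF @: K)%VS.

Lemma UspaceP alpha tau delta l x :
  reflect (exists2 u, u \in K & x = alpha * Umap tau delta l u)
          (x \in Uspace alpha tau delta l).
Proof. by apply: (iffP memv_imgP) => -[u uK ->]; exists u; rewrite ?comp_lfunE ?lfunE. Qed.

Lemma is_scaled_UE alpha tau delta l V :
  is_scaled_U q K alpha tau delta gamma l V <-> V = Uspace alpha tau delta l.
Proof.
split=> [V_def | -> x]; last by split=> [/UspaceP | /UspaceP].
by apply/vspaceP => x; apply/idP/idP => [/V_def/UspaceP | /UspaceP/V_def].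
Qed.

Lemma memv_twist tau u : tau \in K -> u \in K -> twist tau u \in K.
Proof. by move=> tauK uK; rewrite rpredD ?rpredM ?rpredX. Qed.

Lemma Uspace_scale_alg (c : F) alpha tau delta l : c != 0 ->
  Uspace (c%:A * alpha) tau delta l = Uspace alpha tau delta l.
Proof.
move=> c_neq0; apply/vspaceP => x; apply/UspaceP/UspaceP => -[u uK ->].
  by exists (c *: u); rewrite ?memvZ // linearZ /= -scalerAr -mulrA mulr_algl.
exists (c^-1 *: u); first by rewrite memvZ.
by rewrite linearZ /= -scalerAr -mulrA mulr_algl scalerA mulVf ?scale1r.
Qed.

Variable r : nat.
Hypothesis minPoly_size : size (minPoly K gamma) = r.+1.

Lemma Umap_eq0 tau delta l u : tau \in K -> delta \in K -> u \in K ->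
  (0 < l)%N -> (l + l < r)%N -> Umap tau delta l u = 0 -> u = 0.
Proof.
move=> tauK deltaK uK l_gt0 ll_lt_r Uu_eq0.
have [] // := powers4_coef_eq0 minPoly_size (c1 := twist tau u * delta) (c2 := 0) (c3 := 0)
  uK _ (rpred0 _) (rpred0 _) l_gt0 l_gt0 ll_lt_r.
- by rewrite rpredM ?memv_twist.
- by rewrite !mul0r !addr0.
Qed.

Lemma dim_Uspace alpha tau delta l : alpha != 0 -> tau \in K -> delta \in K ->
  (0 < l)%N -> (l + l < r)%N -> \dim (Uspace alpha tau delta l) = \dim K.
Proof.
move=> alpha_neq0 tauK deltaK l_gt0 ll_lt_r; rewrite limg_dim_eq //.
apply/eqP; rewrite -subv0; apply/subvP => u /memv_capP[uK].
rewrite memv_ker comp_lfunE !lfunE /= mulf_eq0 (negbTE alpha_neq0) /= => /eqP.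
by move/(Umap_eq0 tauK deltaK uK l_gt0 ll_lt_r) ->; rewrite mem0v.
Qed.

Section Intersection.
Variables (tau tau' delta delta' : L) (l l' : nat).
Hypotheses (tauK : tau \in K) (tau'K : tau' \in K) (tau_neq0 : tau != 0).
Hypotheses (deltaK : delta \in K) (delta'K : delta' \in K).
Hypotheses (delta_neq0 : delta != 0) (delta'_neq0 : delta' != 0).
Hypotheses (l_gt0 : (0 < l)%N) (l'_gt0 : (0 < l')%N) (ll'_lt_r : (l + l' < r)%N).
Hypothesis tau_rigid :
  forall lam, lam \in K -> lam != 0 -> tau * lam ^+ q = lam * tau' -> tau = tau'.

Local Notation U := (Umap tau delta l).
Local Notation U' := (Umap tau' delta' l').

Lemma Umap_cross_coefs u1 u2 v1 v2 : u1 \in K -> u2 \in K -> v1 \in K -> v2 \in K ->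
  U u1 * U' v2 = U u2 * U' v1 ->
  [/\ u1 * v2 = u2 * v1,
      twist tau u1 * twist tau' v2 = twist tau u2 * twist tau' v1 &
      delta * (twist tau u1 * v2 - twist tau u2 * v1)
        + (l == l')%:R * (delta' * (u1 * twist tau' v2 - u2 * twist tau' v1)) = 0].
Proof.
move=> u1K u2K v1K v2K cross.
have [] := powers4_coef_eq0 minPoly_size
  (c0 := u1 * v2 - u2 * v1)
  (c1 := delta * (twist tau u1 * v2 - twist tau u2 * v1))
  (c2 := delta' * (u1 * twist tau' v2 - u2 * twist tau' v1))
  (c3 := delta * delta' * (twist tau u1 * twist tau' v2 - twist tau u2 * twist tau' v1))
  _ _ _ _ l_gt0 l'_gt0 ll'_lt_r.
- by rewrite rpredB ?rpredM.
- by rewrite rpredM ?rpredB ?rpredM ?memv_twist.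
- by rewrite rpredM ?rpredB ?rpredM ?memv_twist.
- by rewrite !rpredM ?rpredB ?rpredM ?memv_twist.
- rewrite -(subrr (U u2 * U' v1)) -{1}cross.
  by rewrite /Umap exprD; ring.
move=> /eqP; rewrite subr_eq0 => /eqP c0_eq0 /eqP.
by rewrite !mulf_eq0 (negbTE delta_neq0) (negbTE delta'_neq0) subr_eq0 => /eqP c3_eq0.
Qed.

Lemma Umap_cross_scalar u1 u2 v1 v2 : u1 \in K -> u2 \in K -> v1 \in K -> v2 \in K ->
  u1 != 0 -> v1 != 0 -> v2 \notin <[v1]>%VS -> U u1 * U' v2 = U u2 * U' v1 ->
  tau = tau' /\ exists lam, [/\ lam \in K, lam ^+ q = lam, u1 = lam * v1 & u2 = lam * v2].
Proof.
move=> u1K u2K v1K v2K u1_neq0 v1_neq0 v2_notin cross.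
have [c0_eq0 c3_eq0 _] := Umap_cross_coefs u1K u2K v1K v2K cross.
have [lam [lamK lam_neq0 u1E u2E]] :
    exists lam, [/\ lam \in K, lam != 0, u1 = lam * v1 & u2 = lam * v2].
  exists (u1 / v1); split; rewrite ?rpred_div ?mulf_neq0 ?invr_eq0 ?divfK //.
  by apply: (mulIf v1_neq0); rewrite -c0_eq0; field.
subst u1 u2.
have tau_lam : tau * lam ^+ q = lam * tau'.
  have : (tau * lam ^+ q - lam * tau') * (v1 ^+ q * v2 - v1 * v2 ^+ q) = 0.
    transitivity (twist tau (lam * v1) * twist tau' v2 - twist tau (lam * v2) * twist tau' v1).
      by rewrite /twist !exprMn; ring.
    by rewrite c3_eq0 subrr.
  move/eqP; rewrite mulf_eq0 !subr_eq0 (negbTE (frob_cross_neq0 v1_neq0 v2_notin)) orbF.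
  by move/eqP.
have tau_eq := tau_rigid lamK lam_neq0 tau_lam.
split=> //; exists lam; split=> //.
by apply: (mulfI tau_neq0); rewrite tau_lam tau_eq mulrC.
Qed.

Lemma Umap_cross_params lam v1 v2 : lam \in K -> v1 \in K -> v2 \in K -> lam != 0 ->
  lam ^+ q = lam -> tau = tau' -> v1 != 0 -> v2 \notin <[v1]>%VS ->
  U (lam * v1) * U' v2 = U (lam * v2) * U' v1 -> l = l' /\ delta = delta'.
Proof.
move=> lamK v1K v2K lam_neq0 lam_q tau_eq v1_neq0 v2_notin cross.
have [_ _] := Umap_cross_coefs (rpredM lamK v1K) (rpredM lamK v2K) v1K v2K cross.
rewrite -tau_eq => coef_l.
have : lam * tau * (v1 ^+ q * v2 - v1 * v2 ^+ q) * (delta - (l == l')%:R * delta') = 0.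
  by rewrite -coef_l /twist !exprMn lam_q; ring.
move/eqP; rewrite !mulf_eq0 (negbTE lam_neq0) (negbTE tau_neq0) !subr_eq0.
rewrite (negbTE (frob_cross_neq0 v1_neq0 v2_notin)) /=.
have [l_eq|_] := eqVneq l l'; first by rewrite mul1r => /eqP.
by rewrite mul0r => /eqP delta_eq0; move/eqP: delta_neq0.
Qed.

Lemma Uspace_cap_gt1 alpha beta : alpha != 0 -> beta != 0 ->
  (1 < \dim (Uspace alpha tau delta l :&: Uspace beta tau' delta' l'))%N ->
  [/\ tau = tau', delta = delta', l = l' & exists c : F, beta = c%:A * alpha].
Proof.
move=> alpha_neq0 beta_neq0 /dimv_gt1_free_pair[w1 [w2 []]].
move=> /memv_capP[/UspaceP[u1 u1K w1E] /UspaceP[v1 v1K w1E']].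
move=> /memv_capP[/UspaceP[u2 u2K w2E] /UspaceP[v2 v2K w2E']] w1_neq0 w2_notin.
have u1_neq0 : u1 != 0.
  by apply: contraNneq w1_neq0 => u1_eq0; rewrite w1E u1_eq0 linear0 mulr0.
have U'v1_neq0 : U' v1 != 0.
  by apply: contraNneq w1_neq0 => U'v1_eq0; rewrite w1E' U'v1_eq0 mulr0.
have v1_neq0 : v1 != 0 by apply: contraNneq U'v1_neq0 => ->; rewrite linear0.
have v2_notin : v2 \notin <[v1]>%VS.
  apply: contra w2_notin => /vlineP[c v2E]; apply/vlineP; exists c.
  by rewrite w2E' w1E' v2E linearZ /= scalerAr.
have cross : U u1 * U' v2 = U u2 * U' v1.
  apply: (mulfI (mulf_neq0 alpha_neq0 beta_neq0)).
  transitivity ((alpha * U u1) * (beta * U' v2)); first by ring.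
  by rewrite -w1E -w2E' w1E' w2E; ring.
have [tau_eq [lam [lamK lam_q u1E u2E]]] :=
  Umap_cross_scalar u1K u2K v1K v2K u1_neq0 v1_neq0 v2_notin cross.
have lam_neq0 : lam != 0 by apply: contraNneq u1_neq0 => lam_eq0; rewrite u1E lam_eq0 mul0r.
rewrite u1E u2E in cross.
have [l_eq delta_eq] :=
  Umap_cross_params lamK v1K v2K lam_neq0 lam_q tau_eq v1_neq0 v2_notin cross.
split=> //; have /vlineP[c lamE] : lam \in 1%VS by rewrite mem1v_card lam_q.
exists c; apply: (mulIf U'v1_neq0).
rewrite -w1E' w1E u1E lamE -scalerAl mul1r linearZ -tau_eq -delta_eq -l_eq /=.
by rewrite -scalerAr -mulrA mulr_algl.
Qed.

End Intersection.

Variables (k : nat) (xi : L) (tau : nat -> L).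
Local Notation e := ((r.+1)./2 - 1)%N.
Hypotheses (k_ge2 : (2 <= k)%N) (r_gt2 : (2 < r)%N) (dimK : \dim K = k).
Hypothesis xi_prim : (q ^ k - 1)%N.-primitive_root xi.
Hypothesis tauK_neq0 : forall i, (i < q - 1)%N -> tau i \in K /\ tau i != 0.
Hypothesis tau_coset : forall i j m, (i < q - 1)%N -> (j < q - 1)%N ->
  tau i = tau j * xi ^+ ((q - 1) * m) -> i = j.

Lemma e_gt0 : (0 < e)%N. Proof. rewrite -divn2; lia. Qed.

Lemma double_e_lt : (e + e < r)%N. Proof. rewrite -divn2; lia. Qed.

Lemma tau_rigid i j lam : (i < q - 1)%N -> (j < q - 1)%N -> lam \in K -> lam != 0 ->
  tau i * lam ^+ q = lam * tau j -> i = j.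
Proof.
move=> i_lt j_lt lamK lam_neq0 tau_lam.
have q_gt0 : (0 < q)%N by apply: ltnW (finNzRing_gt1 F).
have lam_unity : lam ^+ (q ^ k - 1) = 1.
  apply: (mulIf lam_neq0); rewrite mul1r -exprSr subn1 prednK ?expn_gt0 ?q_gt0 //.
  by apply/eqP; rewrite -dimK -(Fermat's_little_theorem K).
have [m lamE] := prim_rootP xi_prim lam_unity.
apply/esym/(tau_coset (m := m)) => //; apply: (mulfI lam_neq0).
rewrite mulnC exprM -lamE -tau_lam -{1}(subnK q_gt0) addn1 exprS.
by rewrite mulrCA.
Qed.

Definition admissible (alpha : L) (i : nat) (delta : L) (l : nat) :=
  [/\ alpha != 0, (i < q - 1)%N, delta \in K, delta != 0 & (0 < l <= e)%N].

Lemma in_codeP V : in_code q e K tau gamma V <->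
  exists alpha i delta l, admissible alpha i delta l /\ V = Uspace alpha (tau i) delta l.
Proof.
split=> [[a [a_neq0 [i [i_lt [d [dK d_neq0 [l [l_gt0 l_le /is_scaled_UE ->]]]]]]]]|].
  by exists a, i, d, l; split=> //; split=> //; apply/andP.
move=> [a [i [d [l [[a_neq0 i_lt dK d_neq0 /andP[l_gt0 l_le]] ->]]]]].
by exists a; split=> //; exists i; split=> //; exists d; split=> //; exists l; split=> //;
  apply/is_scaled_UE.
Qed.

Lemma dim_admissible a i d l : admissible a i d l -> \dim (Uspace a (tau i) d l) = k.
Proof.
case=> a_neq0 i_lt dK _ /andP[l_gt0 l_le]; rewrite -dimK dim_Uspace //.
  by case: (tauK_neq0 i_lt).
exact: leq_ltn_trans (leq_add l_le l_le) double_e_lt.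
Qed.

Lemma admissible_cap_gt1 a i d l b j d' l' :
  admissible a i d l -> admissible b j d' l' ->
  (1 < \dim (Uspace a (tau i) d l :&: Uspace b (tau j) d' l'))%N ->
  [/\ i = j, d = d', l = l' & exists c : F, b = c%:A * a].
Proof.
move=> [a_neq0 i_lt dK d_neq0 /andP[l_gt0 l_le]] [b_neq0 j_lt d'K d'_neq0 /andP[l'_gt0 l'_le]].
have [tauiK taui_neq0] := tauK_neq0 i_lt; have [taujK _] := tauK_neq0 j_lt.
have ll'_lt_r : (l + l' < r)%N := leq_ltn_trans (leq_add l_le l'_le) double_e_lt.
have rigid lam : lam \in K -> lam != 0 -> tau i * lam ^+ q = lam * tau j -> tau i = tau j.
  by move=> lamK lam_neq0 /(tau_rigid i_lt j_lt lamK lam_neq0) ->.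
move=> cap_gt1; have [tau_eq -> -> b_eq] := Uspace_cap_gt1 tauiK taujK taui_neq0 dK d'K
  d_neq0 d'_neq0 l_gt0 l'_gt0 ll'_lt_r rigid a_neq0 b_neq0 cap_gt1.
split=> //.
by apply: (tau_coset (m := 0)) => //; rewrite muln0 expr0 mulr1.
Qed.

Lemma admissible_cap_le1 a i d l b j d' l' :
  admissible a i d l -> admissible b j d' l' ->
  Uspace a (tau i) d l != Uspace b (tau j) d' l' ->
  (\dim (Uspace a (tau i) d l :&: Uspace b (tau j) d' l') <= 1)%N.
Proof.
move=> adm adm' neq; rewrite leqNgt; apply: contra neq => /(admissible_cap_gt1 adm adm').
case=> <- <- <- [c b_eq]; rewrite b_eq Uspace_scale_alg //.
case: adm' => b_neq0 _ _ _ _; apply: contraNneq b_neq0 => c_eq0.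
by rewrite b_eq c_eq0 scale0r mul0r.
Qed.

Lemma code_dim V : in_code q e K tau gamma V -> \dim V = k.
Proof. by case/in_codeP => [a [i [d [l [adm ->]]]]]; exact: dim_admissible. Qed.

Lemma code_cyclic (V W : {vspace L}) alpha : in_code q e K tau gamma V -> alpha != 0 ->
  (forall x, x \in W <-> exists2 v, v \in V & x = alpha * v) -> in_code q e K tau gamma W.
Proof.
case/in_codeP => [a [i [d [l [[a_neq0 i_lt dK d_neq0 l_in] ->]]]]] alpha_neq0 W_def.
apply/in_codeP; exists (alpha * a), i, d, l; split; first by split; rewrite ?mulf_neq0.
apply/vspaceP => x; apply/idP/UspaceP => [/W_def[_ /UspaceP[u uK ->] ->]|[u uK ->]].
  by exists u; rewrite ?mulrA.
by apply/W_def; exists (a * Umap (tau i) d l u); [apply/UspaceP; exists u | rewrite mulrA].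
Qed.

Lemma code_dist_ge U V : in_code q e K tau gamma U -> in_code q e K tau gamma V -> U != V ->
  (2 * k - 2 <= subspace_dist U V)%N.
Proof.
case/in_codeP => [a [i [d [l [adm ->]]]]]; case/in_codeP => [b [j [d' [l' [adm' ->]]]]] neq.
by apply: subspace_dist_cap_le1 (admissible_cap_le1 adm adm' neq); rewrite dim_admissible.
Qed.

Lemma admissible1 : admissible 1 0 1 1.
Proof. by split; rewrite ?oner_neq0 ?rpred1 ?e_gt0 ?subn_gt0 ?finNzRing_gt1. Qed.

Lemma meeting_Uspace_pair : exists theta, [/\ admissible theta 0 1 1,
  Uspace 1 (tau 0) 1 1 != Uspace theta (tau 0) 1 1 &
  (0 < \dim (Uspace 1 (tau 0) 1 1 :&: Uspace theta (tau 0) 1 1))%N].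
Proof.
have [_ tau0K _ _ _] := admissible1; have [{}tau0K _] := tauK_neq0 tau0K.
pose g := Umap (tau 0) 1 1.
have g_inj u : u \in K -> g u = 0 -> u = 0 by move=> uK; apply: Umap_eq0; rewrite ?rpred1.
have [z zK z_notin] : exists2 z, z \in K & z \notin <[1]>%VS.
  by apply: exists_notin_vspace; rewrite dim_vline oner_neq0 dimK.
have gz_neq0 : g z != 0.
  by apply: contraNneq z_notin => /(g_inj _ zK) ->; rewrite mem0v.
have g1_neq0 : g 1 != 0 by apply/eqP => /(g_inj _ (rpred1 _))/eqP; rewrite oner_eq0.
(* [theta * g z = g 1]: both spaces contain [g 1]; they differ because [z] is not in [F]. *)
pose theta := g 1 / g z.
have adm_theta : admissible theta 0 1 1.
  by case: admissible1 => *; split; rewrite ?mulf_neq0 ?invr_eq0.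
exists theta; split=> //; last first.
  rewrite lt0n dimv_eq0; apply: contraNneq g1_neq0 => cap_eq0.
  rewrite -memv0 -cap_eq0; apply/memv_capP; split; apply/UspaceP.
    by exists 1; rewrite ?rpred1 ?mul1r.
  by exists z; rewrite /theta ?divfK.
apply/eqP => U_eq_V.
have cap_gt1 : (1 < \dim (Uspace 1 (tau 0) 1 1 :&: Uspace theta (tau 0) 1 1))%N.
  by rewrite -U_eq_V capvv (dim_admissible admissible1).
have [_ _ _ [c]] := admissible_cap_gt1 admissible1 adm_theta cap_gt1; rewrite mulr1 => theta_eq.
have /eqP : c *: z - 1 = 0.
  apply: g_inj; first by rewrite rpredB ?memvZ ?rpred1.
  by rewrite /g linearB linearZ /= -mulr_algl -theta_eq /theta /g divfK ?subrr.
rewrite subr_eq0 => /eqP cz_eq1; move: z_notin.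
have c_neq0 : c != 0 by apply: contra_eq_neq cz_eq1 => ->; rewrite scale0r eq_sym oner_neq0.
by rewrite -[z]scale1r -(mulVf c_neq0) -scalerA cz_eq1 memvZ ?memv_line.
Qed.

Lemma code_dist_attained : exists U V, [/\ in_code q e K tau gamma U, in_code q e K tau gamma V,
  U != V & subspace_dist U V = (2 * k - 2)%N].
Proof.
have [theta [adm_theta U_neq_V cap_gt0]] := meeting_Uspace_pair.
exists (Uspace 1 (tau 0) 1 1), (Uspace theta (tau 0) 1 1); split=> //.
- by apply/in_codeP; exists 1, 0%N, 1, 1%N; split; first exact: admissible1.
- by apply/in_codeP; exists theta, 0%N, 1, 1%N.
apply: subspace_dist_cap1 (dim_admissible admissible1) (dim_admissible adm_theta) _.
by apply/anti_leq; rewrite cap_gt0 (admissible_cap_le1 admissible1 adm_theta U_neq_V).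
Qed.

Hypothesis dimL : \dim {:L} = (r * k)%N.
Local Notation T := (finvect_type L).

(* The exponent [l], with [1 <= l <= e], is stored as [l.-1 : 'I_e]. *)
Definition code_param := (T * ('I_(q - 1) * (T * 'I_e)))%type.

Definition param_space (x : code_param) : {vspace L} :=
  Uspace x.1 (tau x.2.1) x.2.2.1 x.2.2.2.+1.

Definition admissible_params : {set code_param} :=
  setX [set~ 0] (setX setT (setX ([set d : T | d \in K] :\ 0) setT)).

Lemma admissible_paramsP x :
  x \in admissible_params -> admissible x.1 x.2.1 x.2.2.1 x.2.2.2.+1.
Proof.
by rewrite !inE => /and4P[x1_neq0 _ /andP[x221_neq0 x221K] _]; split; rewrite /= ?ltn_ord.
Qed.

Lemma card_admissible_params :
  #|admissible_params| = ((q ^ (r * k) - 1) * ((q - 1) * ((q ^ k - 1) * e)))%N.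
Proof.
have card_T0 : #|[set~ (0 : T)]| = (q ^ (r * k) - 1)%N.
  rewrite cardsC1 -subn1; have := card_vspace (fullv : {vspace T}).
  by rewrite card_vspacef dimL => ->.
have card_K : #|[set d : T | d \in K]| = (q ^ k)%N.
  by rewrite -dimK -(card_vspace (K : {vspace T})); apply: eq_card => d; rewrite inE.
have card_K0 : #|[set d : T | d \in K] :\ 0| = (q ^ k - 1)%N.
  by rewrite -card_K (cardsD1 0 [set d : T | d \in K]) inE rpred0 add1n subn1.
by rewrite /admissible_params !cardsX card_T0 card_K0 !cardsT !card_ord.
Qed.

Lemma param_space_fiber x : x \in admissible_params ->
  [set y in admissible_params | param_space y == param_space x]
    = (fun c : F => ((c%:A * x.1 : T), x.2)) @: [set~ 0].
Proof.
move=> xP; have adm_x := admissible_paramsP xP.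
apply/setP => y; rewrite inE; apply/andP/imsetP => [[yP /eqP eq_xy]|[c]].
  have adm_y := admissible_paramsP yP.
  have cap_gt1 : (1 < \dim (param_space x :&: param_space y))%N.
    by rewrite eq_xy capvv dim_admissible.
  have [eq_i eq_d eq_l [c y1E]] := admissible_cap_gt1 adm_x adm_y cap_gt1.
  have c_neq0 : c != 0.
    case: adm_y => y1_neq0 _ _ _ _; apply: contraNneq y1_neq0 => c_eq0.
    by rewrite y1E c_eq0 scale0r mul0r.
  exists c; first by rewrite !inE.
  move: y1E eq_i eq_d eq_l; case: y {yP eq_xy adm_y cap_gt1} => y1 [yi [yd yl]] /= ->.
  by case: x {xP adm_x} => x1 [xi' [xd xl]] /= /val_inj-> -> [/val_inj->].
rewrite in_setC1 => c_neq0 ->; split; last by rewrite /param_space /= Uspace_scale_alg.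
case: adm_x => x1_neq0 _ _ _ _; move: xP; rewrite !inE /= !andbT => /andP[_ ->].
by rewrite mulf_neq0 // -in_algE fmorph_eq0.
Qed.

Lemma count_param_space x : x \in admissible_params ->
  count (fun y => param_space y == param_space x) (enum admissible_params) = (q - 1)%N.
Proof.
move=> xP; rewrite -size_filter.
have /card_uniqP <- := filter_uniq (fun y => param_space y == param_space x)
  (enum_uniq (mem admissible_params)).
rewrite (eq_card (B := [set y in admissible_params | param_space y == param_space x])).
  rewrite param_space_fiber // card_imset ?cardsC1 ?subn1 // => c c' [eq_cc'].
  apply: (fmorph_inj (in_alg L)); apply: mulIf eq_cc'.
  by case: (admissible_paramsP xP).
by move=> y; rewrite mem_filter mem_enum !inE andbC.
Qed.

Lemma code_card : exists s : seq {vspace L}, [/\ uniq s,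
  forall V, V \in s <-> in_code q e K tau gamma V &
  size s = (e * (q ^ k - 1) * (q ^ (r * k) - 1))%N].
Proof.
exists (undup [seq param_space x | x <- enum admissible_params]); split.
- exact: undup_uniq.
- move=> V; rewrite mem_undup; split.
    case/mapP => x; rewrite mem_enum => xP ->; apply/in_codeP.
    by exists x.1, x.2.1, x.2.2.1, x.2.2.2.+1; split; first exact: admissible_paramsP.
  case/in_codeP => [a [i [d [l [[a_neq0 i_lt dK d_neq0 /andP[l_gt0 l_le]] ->]]]]].
  have l_lt : (l.-1 < e)%N by rewrite prednK.
  apply/mapP; exists ((a : T), (Ordinal i_lt, ((d : T), Ordinal l_lt))).
    by rewrite mem_enum !inE /= a_neq0 dK d_neq0.
  by rewrite /param_space /= prednK.
have q1_gt0 : (0 < q - 1)%N by rewrite subn_gt0 finNzRing_gt1.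
apply/eqP; rewrite -(eqn_pmul2r q1_gt0) -size_uniform_fibers; last first.
  by move=> x; rewrite mem_enum; exact: count_param_space.
by rewrite -cardE card_admissible_params; apply/eqP; ring.
Qed.

End OrbitCode.

Theorem lemma3p1
  (F : finFieldType) (L : fieldExtType F) (k r : nat)
  (K : {subfield L}) (xi gamma : L) (tau : nat -> L) :
  let q := #|F| in
  let n := (r * k)%N in
  let e := ((r.+1)./2 - 1)%N in
  (2 <= k)%N -> (2 < r)%N ->
  \dim {:L} = n ->
  \dim K = k ->
  (* xi is a primitive element of F_{q^k} *)
  xi \in K -> (q ^ k - 1)%N.-primitive_root xi ->
  (* tau_0, ..., tau_{q-2} : fixed representatives of the cosets of
     G = F_{q^k}^* / <xi^(q-1)> *)
  (forall i, (i < q - 1)%N -> tau i \in K /\ tau i != 0) ->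
  (forall i j m, (i < q - 1)%N -> (j < q - 1)%N ->
     tau i = tau j * xi ^+ ((q - 1) * m) -> i = j) ->
  (forall x, x \in K -> x != 0 ->
     exists2 i, (i < q - 1)%N & exists m, x = tau i * xi ^+ ((q - 1) * m)) ->
  (* gamma : root of an irreducible polynomial of degree r over F_{q^k},
     generating F_{q^n} over F_{q^k} *)
  size (minPoly K gamma) = r.+1 ->
  <<K; gamma>>%VS = fullv ->
  let C := in_code q e K tau gamma in
  [/\ (* constant dimension k *)
      (forall V, C V -> \dim V = k),
      (* cyclic: closed under multiplication by F_{q^n}^* *)
      (forall (V W : {vspace L}) (alpha : L), C V -> alpha != 0 ->
         (forall x, x \in W <-> exists2 v, v \in V & x = alpha * v) -> C W),
      (* cardinality e (q^k - 1)(q^n - 1) *)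
      (exists s : seq {vspace L}, [/\ uniq s, (forall V, V \in s <-> C V) &
         size s = (e * (q ^ k - 1) * (q ^ n - 1))%N]) &
      (* minimum distance 2k - 2 *)
      (forall U V, C U -> C V -> U != V -> (2 * k - 2 <= subspace_dist U V)%N)
      /\ (exists U V, [/\ C U, C V, U != V & subspace_dist U V = (2 * k - 2)%N])].
Proof.
move=> q n e k_ge2 r_gt2 dimL dimK _ xi_prim tauK_neq0 tau_coset _ minPoly_size _ C.
split; last split.
- by move=> V /(code_dim minPoly_size k_ge2 r_gt2 dimK xi_prim tauK_neq0).
- by move=> V W alpha /code_cyclic; apply.
- exact: (code_card minPoly_size k_ge2 r_gt2 dimK xi_prim tauK_neq0 tau_coset dimL).
- by move=> U V /(code_dist_ge minPoly_size k_ge2 r_gt2 dimK xi_prim tauK_neq0 tau_coset); apply.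
- exact: (code_dist_attained minPoly_size k_ge2 r_gt2 dimK xi_prim tauK_neq0 tau_coset).
Qed.
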